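(* Let $e$ be a term, let $I,\tilde I$ be interpretations with $I=\tilde I$ on $\Sigma(e)$, and let $v,\tilde v$ be states with $v\downarrow CN(e)=\tilde v\downarrow CN(e)$ on $FV(e)$. Then $Iv[\![e]\!]=\tilde I\tilde v[\![e]\!]$. Moreover, $FV(e)$ and $CN(e)$ are the smallest sets with this property. That is, suppose $S\subseteq\mathcal V$ and $D\subseteq\Omega$ are such that for all $I$, $v$, $\tilde v$ with $v\downarrow D=\tilde v\downarrow D$ on $S$ we have $Iv[\![e]\!]=I\tilde v[\![e]\!]$. Then $FV(e)\subseteq S$ and $CN(e)\subseteq D$.
   Context: Setting (dLCHP). Variables and channels. Variables are $\mathcal V=\mathcal V_{\mathbb R}\cup\mathcal V_{\mathbb N}\cup\mathcal V_{\mathcal T}$ (real, integer and trace variables). Each $x\in\mathcal V_{\mathbb R}$ has a differential symbol $x'\in\mathcal V_{\mathbb R}$. The variable $\mu\in\mathcal V_{\mathbb R}$ is the designated global time. $\Omega$ is the set of channel names. All channel sets and variable sets occurring in the syntax are finite or cofinite. $S^\complement$ denotes the complement of $S$. Syntax of terms. Terms have four sorts: - real terms $\theta::=x\mid f(\bar{ch},\bar e)\mid\theta_1+\theta_2\mid\theta_1\cdot\theta_2\mid(\eta)'\mid\mathrm{val}(te)\mid\mathrm{time}(te)$; - integer terms $\iota::=n\mid f(\bar{ch},\bar e)\mid\iota_1+\iota_2\mid|te|$; - channel terms $f(\bar{ch},\bar e)\mid\mathrm{chan}(te)$; - trace terms $te::=h\mid f(\bar{ch},\bar e)\mid\langle ch,\eta_1,\eta_2\rangle\mid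 te_1\cdot te_2\mid te\downarrow C\mid te[\iota]$. Here $\eta,\eta_i$ are polynomials with rational coefficients in real variables. $f(\bar{ch},\bar e)$ is a function symbol (including constants) annotated with a channel set $\bar{ch}\subseteq\Omega$ and applied to terms $\bar e$. Operators such as $+,\cdot,\downarrow C$ are built-in. Traces and states. - A trace is a finite sequence of events $\langle ch,d,s\rangle$ with $ch\in\Omega$, $d\in\mathbb R$ (value) and $s\in\mathbb R$ (timestamp), with strictly increasing timestamps. - A state $v$ maps each variable to a value of its type (real, natural number or trace). $v[z\mapsto d]$ is the modified state. - $\tau\downarrow C$ is the subsequence of events whose channel lies in $C$. - $v\downarrow C$ replaces $v(h)$ by $v(h)\downarrow C$ for every $h\in\mathcal V_{\mathcal T}$. - ''$v\downarrow D=\tilde v\downarrow D$ on $S$'' means that $v\downarrow D$ and $\tilde v\downarrow D$ agree on every variable in $S$. Interpretations. An interpretation $I$ assigns to function symbols functions of matching sorts (smooth in real arguments if real-valued) and to predicate symbols relations. Term semantics. - Variables: $Iv[\![z]\!]=v(z)$. - Function symbols: $Iv[\![f(\bar{ch},e_1,\dots,e_k)]\!]=I(f)(I\tilde v[\![e_1]\!],\dots,I\tilde v[\![e_k]\!])$ where $\tilde v=v\downarrow\bar{ch}$. - Built-ins (sum, product, $\mathrm{val}$, $\mathrm{time}$, $\mathrm{chan}$, length, concatenation, projection, indexing, communication items) are evaluated pointwise. - Differentials: $Iv[\![(\eta)']\!]=\sum_x v(x')\,\partial Iv[\![\eta]\!]/\partial x$. Static semantics. - $FV(e)$ is the set of $z\in\mathcal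 V$ such that some $I,v,\tilde v$ with $v=\tilde v$ on $\{z\}^\complement$ satisfy $Iv[\![e]\!]\ne I\tilde v[\![e]\!]$. - $CN(e)$ is the set of $ch\in\Omega$ such that some $I,v,\tilde v$ with $v\downarrow\{ch\}^\complement=\tilde v\downarrow\{ch\}^\complement$ satisfy $Iv[\![e]\!]\ne I\tilde v[\![e]\!]$. - $\Sigma(e)$ is the set of function symbols occurring in $e$. *)

From Stdlib Require List.
From HB Require Import structures.
From mathcomp Require Import all_boot all_order all_algebra.
From mathcomp Require Import all_classical all_reals all_analysis.
Set Implicit Arguments. Unset Strict Implicit. Unset Printing Implicit Defensive.
Import Order.TTheory GRing.Theory Num.Theory.
Import numFieldNormedType.Exports.
Local Open Scope classical_set_scope.
Local Open Scope ring_scope.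

Definition chan := nat.

(* Real variables: (base name, number of primes); the differential
   symbol x' of x is obtained by adding one prime. *)
Definition rvar := (nat * nat)%type.
Definition dsym (x : rvar) : rvar := (x.1, x.2.+1).
(* designated global time variable mu (plays no role in terms) *)
Definition mu : rvar := (0%N, 0%N).

Inductive dvar := VR of rvar | VN of nat | VT of nat.

Inductive chset := ChFin of seq chan | ChCofin of seq chan.
Definition chset_set (C : chset) : set chan :=
  match C with
  | ChFin l => [set c | c \in l]
  | ChCofin l => [set c | c \notin l]
  end.

Inductive dpoly :=
| PVar of rvar
| PConst of rat
| PAdd of dpoly & dpoly
| PMul of dpoly & dpoly.

Fixpoint pvars (p : dpoly) : seq rvar :=
  match p with
  | PVar x => [:: x]
  | PConst _ => [::]
  | PAdd p q | PMul p q => pvars p ++ pvars q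
  end.

Inductive tsort := SR | SN | SC | ST.

Record fsym := FSym { fname : nat; fargs : seq tsort; fres : tsort }.

Inductive dterm : tsort -> Type :=
| TVar   : rvar -> dterm SR
| TFun   : forall f : fsym, chset -> targs (fargs f) -> dterm (fres f)
| TPlus  : dterm SR -> dterm SR -> dterm SR
| TMult  : dterm SR -> dterm SR -> dterm SR
| TDiff  : dpoly -> dterm SR
| TVal   : dterm ST -> dterm SR
| TTime  : dterm ST -> dterm SR
| TNVar  : nat -> dterm SN
| TNPlus : dterm SN -> dterm SN -> dterm SN
| TLen   : dterm ST -> dterm SN
| TChan  : dterm ST -> dterm SC
| TTVar  : nat -> dterm ST
| TComm  : chan -> dpoly -> dpoly -> dterm ST
| TConc  : dterm ST -> dterm ST -> dterm ST
| TProj  : dterm ST -> chset -> dterm ST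
| TAt    : dterm ST -> dterm SN -> dterm ST
with targs : seq tsort -> Type :=
| ANil  : targs [::]
| ACons : forall s ss, dterm s -> targs ss -> targs (s :: ss).

Fixpoint syms s (e : dterm s) {struct e} : list fsym :=
  match e with
  | TVar _ | TDiff _ | TNVar _ | TTVar _ | TComm _ _ _ => nil
  | TFun f _ a => f :: syms_args a
  | TPlus e1 e2 | TMult e1 e2 | TNPlus e1 e2 | TConc e1 e2 => syms e1 ++ syms e2
  | TVal e1 | TTime e1 | TLen e1 | TChan e1 | TProj e1 _ => syms e1
  | TAt e1 e2 => syms e1 ++ syms e2
  end
with syms_args ss (a : targs ss) {struct a} : list fsym :=
  match a with
  | ANil => nil
  | ACons _ _ e a' => syms e ++ syms_args a'
  end.

Definition Sigma s (e : dterm s) : set fsym := [set f | List.In f (syms e)].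

Section Semantics.
Variable R : realType.

Definition event := (chan * R * R)%type.
Definition ev_chan (e : event) : chan := e.1.1.
Definition ev_val (e : event) : R := e.1.2.
Definition ev_time (e : event) : R := e.2.
Definition ev0 : event := (0%N, 0, 0).

(* semantic values of traces are finite event sequences; traces proper
   are the chronological ones (strictly increasing timestamps). *)
Definition trace := seq event.
Definition chrono (tr : trace) : Prop :=
  sorted (fun a b : event => ev_time a < ev_time b) tr.

Definition tproj (C : set chan) (tr : trace) : trace :=
  seq.filter (fun ev => `[< C (ev_chan ev) >]) tr.

Definition sval (s : tsort) : Type :=
  match s with SR => R | SN => nat | SC => chan | ST => trace end.

Fixpoint vals (ss : seq tsort) : Type :=
  match ss with [::] => unit | s :: ss' => (sval s * vals ss')%type end.

Record dstate := State {
  sR : rvar -> R;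
  sN : nat -> nat;
  sT : nat -> trace }.

Definition valid_state (v : dstate) : Prop := forall h, chrono (sT v h).

Definition sproj (C : set chan) (v : dstate) : dstate :=
  State (sR v) (sN v) (fun h => tproj C (sT v h)).

Definition agree (S : set dvar) (v w : dstate) : Prop :=
  forall z, S z ->
    match z with
    | VR x => sR v x = sR w x
    | VN n => sN v n = sN w n
    | VT h => sT v h = sT w h
    end.

Definition agree_on (D : set chan) (S : set dvar) (v w : dstate) : Prop :=
  agree S (sproj D v) (sproj D w).

Definition dinterp := forall f : fsym, vals (fargs f) -> sval (fres f).

Fixpoint iterD k (ds : seq 'rV[R]_k) (g : 'rV[R]_k -> R) : 'rV[R]_k -> R :=
  match ds with
  | [::] => g
  | d :: ds' => fun x => derive (iterD ds' g) x d
  end.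

Definition smooth k (g : 'rV[R]_k -> R) : Prop :=
  forall ds : seq 'rV[R]_k,
    continuous (iterD ds g) /\ (forall x d, derivable (iterD ds g) x d).

Fixpoint nreal (ss : seq tsort) : nat :=
  match ss with
  | [::] => 0%N
  | SR :: ss' => (nreal ss').+1
  | _ :: ss' => nreal ss'
  end.

(* replace the real arguments (numbered among the real positions) *)
Fixpoint setreals (ss : seq tsort) : vals ss -> (nat -> R) -> vals ss :=
  match ss return vals ss -> (nat -> R) -> vals ss with
  | [::] => fun a _ => a
  | s :: ss' =>
    match s return vals (s :: ss') -> (nat -> R) -> vals (s :: ss') with
    | SR => fun a r => (r 0%N, setreals a.2 (fun i => r i.+1))
    | SN => fun a r => (a.1, setreals a.2 r)
    | SC => fun a r => (a.1, setreals a.2 r)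
    | ST => fun a r => (a.1, setreals a.2 r)
    end
  end.

Definition rv_fun k (x : 'rV[R]_k) : nat -> R :=
  fun i => oapp (fun j : 'I_k => x ord0 j) 0 (insub i).

Definition valid_interp (I : dinterp) : Prop :=
  (forall (f : fsym) (H : fres f = SR) (a : vals (fargs f)),
     smooth (fun x : 'rV[R]_(nreal (fargs f)) =>
               eq_rect _ sval (I f (setreals a (rv_fun x))) _ H)) /\
  (forall (f : fsym) (H : fres f = ST) (a : vals (fargs f)),
     chrono (eq_rect _ sval (I f a) _ H)).

Definition upd (r : rvar -> R) (x : rvar) (t : R) : rvar -> R :=
  fun y => if y == x then t else r y.

Fixpoint peval (r : rvar -> R) (p : dpoly) : R :=
  match p with
  | PVar x => r x
  | PConst q => ratr q
  | PAdd p q => peval r p + peval r q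
  | PMul p q => peval r p * peval r q
  end.

Fixpoint sem (I : dinterp) (v : dstate) s (e : dterm s) {struct e} : sval s :=
  match e in dterm s return sval s with
  | TVar x => sR v x
  | TFun f C a => I f (sem_args I (sproj (chset_set C) v) a)
  | TPlus e1 e2 => sem I v e1 + sem I v e2
  | TMult e1 e2 => sem I v e1 * sem I v e2
  | TDiff p =>
      \sum_(x <- undup (pvars p))
         sR v (dsym x) * derive1 (fun t => peval (upd (sR v) x t) p) (sR v x)
  | TVal te => match sem I v te with [:: ev] => ev_val ev | _ => 0 end
  | TTime te => match sem I v te with [:: ev] => ev_time ev | _ => 0 end
  | TNVar n => sN v n
  | TNPlus e1 e2 => (sem I v e1 + sem I v e2)%N
  | TLen te => size (sem I v te)
  | TChan te => match sem I v te with [:: ev] => ev_chan ev | _ => 0%N end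
  | TTVar h => sT v h
  | TComm c p1 p2 => [:: (c, peval (sR v) p1, peval (sR v) p2)]
  | TConc e1 e2 => sem I v e1 ++ sem I v e2
  | TProj te C => tproj (chset_set C) (sem I v te)
  | TAt te i =>
      let tr := sem I v te in
      let n := sem I v i in
      if (n < size tr)%N then [:: nth ev0 tr n] else [::]
  end
with sem_args (I : dinterp) (v : dstate) ss (a : targs ss) {struct a} : vals ss :=
  match a in targs ss return vals ss with
  | ANil => tt
  | ACons _ _ e a' => (sem I v e, sem_args I v a')
  end.

Definition FV s (e : dterm s) : set dvar :=
  [set z | exists (I : dinterp) (v w : dstate),
     [/\ valid_interp I, valid_state v, valid_state w,
         agree (~` [set z]) v w & sem I v e <> sem I w e]].

Definition CN s (e : dterm s) : set chan :=
  [set c | exists (I : dinterp) (v w : dstate),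
     [/\ valid_interp I, valid_state v, valid_state w,
         agree setT (sproj (~` [set c]) v) (sproj (~` [set c]) w)
       & sem I v e <> sem I w e]].

End Semantics.

From HB Require Import structures.
From mathcomp Require Import all_boot all_order all_algebra.
From mathcomp Require Import all_classical all_reals all_analysis.
Set Implicit Arguments. Unset Strict Implicit. Unset Printing Implicit Defensive.
Import Order.TTheory GRing.Theory Num.Theory.
Local Open Scope classical_set_scope.
Local Open Scope ring_scope.

(* The semantic sets FV(e) and CN(e) are defined by single-point
   perturbations, so the argument runs in three layers.
   1. A syntactic coincidence lemma [sem_syntactic]: the value of e only
      depends on the function symbols Sigma(e) and on the finitely many
      variables [vars e] occurring in e.
   2. Local-to-global steps.  A channel outside CN(e) can be projected
      away, and one variable outside FV(e) can be changed, without changing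
      the value.  Iterating over a finite list gives [sem_sproj_CN] (only
      the channels of CN(e) matter) and [sem_agree_FV] (only the variables
      of FV(e) matter); finiteness comes from layer 1, since only the traces
      of the variables in [vars e] carry relevant channels.
   3. The first half of [lemma2] chains these facts; minimality is direct:
      a perturbation witnessing z in FV(e) (resp. c in CN(e)) would be
      invisible to any S missing z (resp. D missing c). *)

Scheme dterm_mind := Induction for dterm Sort Prop
  with targs_mind := Induction for targs Sort Prop.

Fixpoint vars s (e : dterm s) {struct e} : list dvar :=
  match e with
  | TVar x => [:: VR x]
  | TFun _ _ a => vars_args a
  | TPlus e1 e2 | TMult e1 e2 | TNPlus e1 e2 | TConc e1 e2 => vars e1 ++ vars e2
  | TDiff p => map VR (pvars p) ++ map (fun x => VR (dsym x)) (pvars p)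
  | TVal e1 | TTime e1 | TLen e1 | TChan e1 | TProj e1 _ => vars e1
  | TNVar n => [:: VN n]
  | TTVar h => [:: VT h]
  | TComm _ p1 p2 => map VR (pvars p1 ++ pvars p2)
  | TAt e1 e2 => vars e1 ++ vars e2
  end
with vars_args ss (a : targs ss) {struct a} : list dvar :=
  match a with
  | ANil => nil
  | ACons _ _ e a' => vars e ++ vars_args a'
  end.

Lemma In_cat (T : Type) (x : T) (s1 s2 : seq T) :
  List.In x (s1 ++ s2) <-> List.In x s1 \/ List.In x s2.
Proof. by elim: s1 => [|a s IH] /=; [tauto | rewrite IH; tauto]. Qed.

Lemma In_cat_forall (T : Type) (P : T -> Prop) (s1 s2 : seq T) :
  (forall x, List.In x (s1 ++ s2) -> P x) ->
  (forall x, List.In x s1 -> P x) /\ (forall x, List.In x s2 -> P x).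
Proof. by move=> H; split=> x Hx; apply: H; apply/In_cat; tauto. Qed.

Lemma in_flatten_map (T : Type) (A : eqType) (f : T -> seq A) (l : seq T) z x :
  List.In z l -> x \in f z -> x \in flatten (map f l).
Proof. by elim: l => //= a l IH [->|/IH Hz] Hx; rewrite mem_cat ?Hx ?Hz ?orbT. Qed.

Lemma In_undup (T : eqType) (x : T) (s : seq T) : x \in undup s -> List.In x s.
Proof.
rewrite mem_undup; elim: s => //= a s IH.
by rewrite in_cons => /orP [/eqP ->|/IH]; tauto.
Qed.

Section Coincidence.
Variable R : realType.

Definition agree_var (z : dvar) (v w : dstate R) : Prop :=
  match z with
  | VR x => sR v x = sR w x
  | VN n => sN v n = sN w n
  | VT h => sT v h = sT w h
  end.

Lemma agree_var_sym z (v w : dstate R) : agree_var z v w -> agree_var z w v.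
Proof. by case: z => /= ? ->. Qed.

Lemma agree_var_sproj C z (v w : dstate R) :
  agree_var z v w -> agree_var z (sproj C v) (sproj C w).
Proof. by case: z => //= h ->. Qed.

Lemma state_ext (v w : dstate R) : (forall z, agree_var z v w) -> v = w.
Proof.
case: v w => rv nv tv [rw nw tw] H.
by congr State; apply: funext => x; [exact: (H (VR x)) | exact: (H (VN x)) |
  exact: (H (VT x))].
Qed.

Lemma peval_agree (r r' : rvar -> R) p :
  (forall x, List.In x (pvars p) -> r x = r' x) -> peval r p = peval r' p.
Proof.
elim: p => [x|q|p IHp q IHq|p IHp q IHq] //= H; first by apply: H; left.
all: by case/In_cat_forall: H => Hp Hq; rewrite IHp ?IHq.
Qed.

Lemma sem_diff_agree (I It : dinterp R) (v w : dstate R) p :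
  (forall x, List.In x (pvars p) -> sR v x = sR w x) ->
  (forall x, List.In x (pvars p) -> sR v (dsym x) = sR w (dsym x)) ->
  sem I v (TDiff p) = sem It w (TDiff p).
Proof.
move=> Hx Hd /=; apply: eq_big_seq => x /In_undup Hp.
rewrite Hd // Hx //; congr (_ * _); congr (derive1 _ _); apply: funext => t.
by apply: peval_agree => y Hy; rewrite /upd; case: (y == x); last exact: Hx.
Qed.

Lemma sem_syntactic s (e : dterm s) (I It : dinterp R) (v w : dstate R) :
  (forall f, List.In f (syms e) -> I f = It f) ->
  (forall z, List.In z (vars e) -> agree_var z v w) ->
  sem I v e = sem It w e.
Proof.
pose Q ss (a : targs ss) := forall (I It : dinterp R) (v w : dstate R),
  (forall f, List.In f (syms_args a) -> I f = It f) ->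
  (forall z, List.In z (vars_args a) -> agree_var z v w) ->
  sem_args I v a = sem_args It w a.
move: s e I It v w; apply: (@dterm_mind _ Q); rewrite /Q /=.
all: try by move=> x I It v w _ H;
  first [apply: (H (VR x)) | apply: (H (VN x)) | apply: (H (VT x))]; left.
all: try by move=> e1 IH1 e2 IH2 I It v w
  /In_cat_forall[S1 S2] /In_cat_forall[V1 V2]; rewrite (IH1 _ _ _ _ S1 V1)
  (IH2 _ _ _ _ S2 V2).
all: try by move=> e1 IH I It v w S V; rewrite (IH _ _ _ _ S V).
- move=> f C a IH I It v w Hs Hv; rewrite (Hs f); last by left.
  congr (It f _); apply: IH => [g Hg|z Hz]; first by apply: Hs; right.
  exact/agree_var_sproj/Hv.
- move=> p I It v w _ /In_cat_forall[Hx Hd].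
  by apply: (sem_diff_agree I It) => x Hp; [apply: (Hx (VR x)) |
    apply: (Hd (VR (dsym x)))]; exact: List.in_map.
- move=> c p1 p2 I It v w _ Hv.
  have /In_cat_forall[H1 H2] : forall x, List.In x (pvars p1 ++ pvars p2) ->
      sR v x = sR w x by move=> x Hx; apply: (Hv (VR x)); exact: List.in_map.
  by rewrite (peval_agree H1) (peval_agree H2).
- by move=> e1 IH C I It v w S V; rewrite (IH _ _ _ _ S V).
- by [].
- move=> s0 ss e1 IH1 a IH2 I It v w /In_cat_forall[S1 S2] /In_cat_forall[V1 V2].
  by rewrite (IH1 _ _ _ _ S1 V1) (IH2 _ _ _ _ S2 V2).
Qed.

Lemma tproj_comp (A B : set chan) (t : trace R) :
  tproj A (tproj B t) = tproj (A `&` B) t.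
Proof. by rewrite /tproj -filter_predI; apply: eq_filter => ev /=; rewrite asbool_and. Qed.

Lemma sproj_comp (A B : set chan) (u : dstate R) :
  sproj A (sproj B u) = sproj (A `&` B) u.
Proof. by rewrite /sproj /=; congr State; apply: funext => h; rewrite tproj_comp. Qed.

Lemma sproj_id (C : set chan) (u : dstate R) : (forall c, C c) -> sproj C u = u.
Proof.
move=> HC; case: u => r n t; rewrite /sproj /=; congr State; apply: funext => h.
by rewrite /tproj (@eq_filter _ _ predT) ?filter_predT // => ev; rewrite asboolT.
Qed.

Lemma sproj_valid C (v : dstate R) : valid_state v -> valid_state (sproj C v).
Proof. by move=> H h; apply: sorted_filter (H h) => a b c; apply: lt_trans. Qed.

Lemma agree_sproj (D : set chan) (S : set dvar) (v w : dstate R) :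
  agree S v w -> agree_on D S v w.
Proof. by move=> H z Sz; apply/agree_var_sproj/H. Qed.

Variables (s : tsort) (e : dterm s) (I : dinterp R).
Hypothesis vI : valid_interp I.

Lemma sem_drop_channel c (u : dstate R) : ~ CN R e c -> valid_state u ->
  sem I u e = sem I (sproj (~` [set c]) u) e.
Proof.
move=> Hc vu; apply: contrapT => hne; apply: Hc.
exists I, u, (sproj (~` [set c]) u); split => //; first exact: sproj_valid.
by move=> -[x|n|h] _ //=; rewrite tproj_comp setIid.
Qed.

Lemma sem_change_variable z (u w : dstate R) : ~ FV R e z ->
  valid_state u -> valid_state w -> agree (~` [set z]) u w ->
  sem I u e = sem I w e.
Proof. by move=> Hz vu vw Hag; apply: contrapT => hne; apply: Hz; exists I, u, w. Qed.

Lemma sem_drop_channels (cs : seq chan) (u : dstate R) :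
  (forall c, c \in cs -> ~ CN R e c) -> valid_state u ->
  sem I u e = sem I (sproj [set c | c \notin cs] u) e.
Proof.
elim: cs u => [|c cs IH] u Hcs vu; first by rewrite sproj_id.
have Hc : ~ CN R e c by apply: Hcs; rewrite in_cons eqxx.
rewrite (sem_drop_channel Hc vu) IH ?sproj_comp; last 2 first.
- by move=> c' Hc'; apply: Hcs; rewrite in_cons Hc' orbT.
- exact: sproj_valid.
congr (sem I (sproj _ u) e); apply/seteqP; split=> c' /=; rewrite in_cons negb_or.
  by move=> [-> /eqP ->].
by move/andP=> [/eqP ? ->].
Qed.

(* Only the channels of CN(e) matter: the finitely many channels occurring
   in the traces read by e and lying outside CN(e) are dropped. *)
Lemma sem_sproj_CN (u : dstate R) : valid_state u ->
  sem I u e = sem I (sproj (CN R e) u) e.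
Proof.
move=> vu.
pose chans z := if z is VT h then map (@ev_chan R) (sT u h) else [::].
pose cs := [seq c <- flatten (map chans (vars e)) | ~~ `[< CN R e c >]].
rewrite (@sem_drop_channels cs) //; last first.
  by move=> c; rewrite mem_filter => /andP[/asboolPn].
apply: sem_syntactic => // -[x|n|h] Hz //=; apply: eq_in_filter => ev Hev /=.
have Hall : ev_chan ev \in flatten (map chans (vars e)).
  by apply: (in_flatten_map Hz); apply: map_f.
by rewrite mem_filter Hall andbT negbK asboolb; case: asboolP.
Qed.

Definition mix (l : list dvar) (u w : dstate R) : dstate R :=
  State (fun x => if `[< List.In (VR x) l >] then sR w x else sR u x)
        (fun n => if `[< List.In (VN n) l >] then sN w n else sN u n)
        (fun h => if `[< List.In (VT h) l >] then sT w h else sT u h).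

Lemma mix_in l u w z : List.In z l -> agree_var z (mix l u w) w.
Proof. by case: z => [x|n|h] H /=; rewrite asboolT. Qed.

Lemma mix_out l u w z : ~ List.In z l -> agree_var z (mix l u w) u.
Proof. by case: z => [x|n|h] H /=; rewrite asboolF. Qed.

Lemma mix_valid l u w : valid_state u -> valid_state w -> valid_state (mix l u w).
Proof. by move=> vu vw h /=; case: ifP. Qed.

Lemma mix_cons_off a l u w z : z <> a ->
  agree_var z (mix l u w) (mix (a :: l) u w).
Proof.
move=> za; have E : List.In z (a :: l) <-> List.In z l.
  by split=> [[E|]|]; [case: za | | right].
by case: z za E => [x|n|h] _ E /=; rewrite (asbool_equiv_eq E).
Qed.

Lemma mix_cons_at a l u w : agree_var a u w ->
  agree_var a (mix l u w) (mix (a :: l) u w).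
Proof.
have Ha : List.In a (a :: l) by left.
by case: a Ha => [x|n|h] Ha /= E; rewrite (asboolT Ha); case: asboolP.
Qed.

Lemma sem_mix (u w : dstate R) (l : list dvar) :
  valid_state u -> valid_state w ->
  (forall z, List.In z l -> FV R e z -> agree_var z u w) ->
  sem I u e = sem I (mix l u w) e.
Proof.
move=> vu vw; elim: l => [|a l IH] Hl.
  by congr (sem I _ e); apply: state_ext => z; apply/agree_var_sym/mix_out.
rewrite IH; last by move=> z Hz; apply: Hl; right.
have [Ha|Ha] := pselect (FV R e a).
  congr (sem I _ e); apply: state_ext => z.
  have [->|za] := pselect (z = a); last exact: mix_cons_off.
  by apply: mix_cons_at; apply: Hl => //; left.
apply: (sem_change_variable Ha) => [||z /= za]; [exact: mix_valid.. |].
exact: mix_cons_off.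
Qed.

Lemma sem_agree_FV (u w : dstate R) : valid_state u -> valid_state w ->
  agree (FV R e) u w -> sem I u e = sem I w e.
Proof.
move=> vu vw Hag; rewrite (@sem_mix u w (vars e)) //; last first.
  by move=> z _ /Hag.
by apply: sem_syntactic => // z Hz; apply: mix_in.
Qed.

End Coincidence.

Lemma FV_minimal (R : realType) s (e : dterm s) (S : set dvar) (D : set chan) :
  (forall (I : dinterp R) (v vt : dstate R),
     valid_interp I -> valid_state v -> valid_state vt ->
     agree_on D S v vt -> sem I v e = sem I vt e) ->
  FV R e `<=` S.
Proof.
move=> H z [I [v [w [vI vv vw hag hne]]]].
apply: contrapT => nS; apply/hne/H/agree_sproj => // z' Sz'.
by apply: hag => /= E; apply: nS; rewrite -E.
Qed.

Lemma CN_minimal (R : realType) s (e : dterm s) (S : set dvar) (D : set chan) :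
  (forall (I : dinterp R) (v vt : dstate R),
     valid_interp I -> valid_state v -> valid_state vt ->
     agree_on D S v vt -> sem I v e = sem I vt e) ->
  CN R e `<=` D.
Proof.
move=> H c [I [v [w [vI vv vw hag hne]]]].
apply: contrapT => nD; apply/hne/H => // z _.
have sub : D `<=` ~` [set c] by move=> c' Dc' /= E; apply: nD; rewrite -E.
move: (hag z Logic.I); case: z => //= h E.
by rewrite -(setIidl sub) -!tproj_comp E.
Qed.

Theorem lemma2 (R : realType) (s : tsort) (e : dterm s) :
  (forall (I It : dinterp R) (v vt : dstate R),
     valid_interp I -> valid_interp It ->
     valid_state v -> valid_state vt ->
     (forall f, Sigma e f -> I f = It f) ->
     agree_on (CN R e) (FV R e) v vt ->
     sem I v e = sem It vt e) /\
  (forall (S : set dvar) (D : set chan),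
     (forall (I : dinterp R) (v vt : dstate R),
        valid_interp I -> valid_state v -> valid_state vt ->
        agree_on D S v vt -> sem I v e = sem I vt e) ->
     FV R e `<=` S /\ CN R e `<=` D).
Proof.
split; last by move=> S D H; split; [exact: FV_minimal H | exact: CN_minimal H].
move=> I It v vt vI _ vv vvt HSigma Hag.
have vv' := sproj_valid (CN R e) vv; have vvt' := sproj_valid (CN R e) vvt.
rewrite (sem_sproj_CN e vI vv) (sem_agree_FV vI vv' vvt' Hag).
rewrite -(sem_sproj_CN e vI vvt).
by apply: sem_syntactic => [f /HSigma|z _] //; case: z.
Qed.
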